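(* Let $E$ be a finite set and $\mathcal{F}\subseteq 2^E$ a non-empty downward-closed set system that is not a matroid. Then there exist weights $w:E\to\mathbb{R}_{\ge 0}$ such that an optimal solution to the nominal problem $\max_{S\in\mathcal{F}} w(S)$ is not an optimal first-stage solution of the robust counterpart $$\max_{S\in\mathcal{F}}\ \min_{f\in E\cup\{\emptyset\}}\ \max_{\substack{e\in (E\setminus(S\cup\{f\}))\cup\{\emptyset\}\\ (S\setminus\{f\})\cup\{e\}\in\mathcal{F}}} w\big((S\setminus\{f\})\cup\{e\}\big).$$
   Context: Downward-closed: $X\in\mathcal{F}$, $X'\subseteq X$ imply $X'\in\mathcal{F}$. A non-empty downward-closed system is a matroid iff whenever $I,J\in\mathcal{F}$ with $|I|<|J|$ there is $g\in J\setminus I$ with $I\cup\{g\}\in\mathcal{F}$. $w(S)=\sum_{x\in S}w(x)$. In the robust counterpart, $f=\emptyset$ means no deletion and $e=\emptyset$ means no addition. *)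

From HB Require Import structures.
From mathcomp Require Import all_boot all_order all_algebra.
From mathcomp Require Import reals.
Set Implicit Arguments. Unset Strict Implicit. Unset Printing Implicit Defensive.
Import Order.TTheory GRing.Theory Num.Theory.
Local Open Scope ring_scope.

Section Defs.
Variable E : finType.

Definition downward_closed (F : {set {set E}}) : Prop :=
  forall X X' : {set E}, X \in F -> X' \subset X -> X' \in F.

Definition exchange_axiom (F : {set {set E}}) : Prop :=
  forall I J : {set E}, I \in F -> J \in F -> (#|I| < #|J|)%N ->
    exists2 g, g \in J :\: I & I :|: [set g] \in F.

Definition is_matroid (F : {set {set E}}) : Prop :=
  F != set0 /\ downward_closed F /\ exchange_axiom F.

Variable R : realType.

Definition wt (w : E -> R) (S : {set E}) : R := \sum_(x in S) w x.

(* f = None means no deletion, e = None means no addition *)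
Definition del (S : {set E}) (f : option E) : {set E} :=
  if f is Some x then S :\ x else S.
Definition ins (S : {set E}) (e : option E) : {set E} :=
  if e is Some y then y |: S else S.

(* e ranges over (E \ (S u {f})) u {emptyset} *)
Definition admissible_add (S : {set E}) (f e : option E) : bool :=
  if e is Some y then (y \notin S) && (Some y != f) else true.

(* The default value of the big max is the
   value of the candidate e = None, which is always admissible when S \in F
   and F is downward closed, so this is the genuine maximum. *)
Definition recovery_value (w : E -> R) (F : {set {set E}}) (S : {set E})
    (f : option E) : R :=
  \big[Num.max/wt w (del S f)]_(e : option E |
        admissible_add S f e && (ins (del S f) e \in F))
      wt w (ins (del S f) e).

(* outer minimum over f in E u {emptyset}; the default value is the value for
   f = None, itself one of the candidates, so this is the genuine minimum. *)
Definition robust_value (w : E -> R) (F : {set {set E}}) (S : {set E}) : R :=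
  \big[Num.min/recovery_value w F S None]_(f : option E)
      recovery_value w F S f.

Definition nominal_optimal (w : E -> R) (F : {set {set E}}) (S : {set E}) :=
  S \in F /\ forall S', S' \in F -> wt w S' <= wt w S.

Definition robust_optimal (w : E -> R) (F : {set {set E}}) (S : {set E}) :=
  S \in F /\ forall S', S' \in F -> robust_value w F S' <= robust_value w F S.

End Defs.

From HB Require Import structures.
From mathcomp Require Import all_boot all_order all_algebra.
From mathcomp Require Import reals.
From mathcomp Require Import lra.

Set Implicit Arguments. Unset Strict Implicit. Unset Printing Implicit Defensive.
Import Order.TTheory GRing.Theory Num.Theory.
Local Open Scope ring_scope.

(** If F is not a matroid, take I, J in F with |J| = |I| + 1 such that no
    element of J \ I extends I. Decreasing |I| + |I \ J| brings this to a
    critical configuration: x in I and g, h outside I with J = I - x + g + h in F,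
    neither I + g nor I + h in F, and every deletion I - c with c <> x repaired
    by g or h. Weigh I by 3, g by 2 and h by 1; then J has maximum weight in F.
    Every deletion from I is repaired by g or h, so I loses at most 2, and at
    most 1 if g repairs every deletion. In that case the adversary deletes g from
    J, otherwise an element c whose deletion from I g cannot repair. Either way
    the only weighted element that could refill J is x, which F forbids, so J
    loses 2, resp. 3. *)

Lemma exists_subset_card (T : finType) (A : {set T}) n :
  (n <= #|A|)%N -> exists2 B : {set T}, B \subset A & #|B| = n.
Proof.
move=> le_nA; exists [set y in take n (enum A)].
  by apply/subsetP => y; rewrite inE => /mem_take; rewrite mem_enum.
by rewrite cardsE (card_uniqP _) ?take_uniq ?enum_uniq // size_takel -?cardE.
Qed.

Lemma setD1_id (T : finType) (A : {set T}) a : a \notin A -> A :\ a = A.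
Proof. by move=> aNA; apply/setDidPl; rewrite disjoint_sym disjoints1. Qed.

Section Weight.
Variables (R : realType) (E : finType) (w : E -> R).

Lemma wt_setU1 (X : {set E}) y : y \notin X -> wt w (y |: X) = w y + wt w X.
Proof. exact: big_setU1. Qed.

Lemma wt_setD1 (X : {set E}) y : y \in X -> wt w (X :\ y) = wt w X - w y.
Proof. by move=> yX; rewrite /wt (big_setD1 y yX) addrC addKr. Qed.

Lemma wt_le (X Y : {set E}) : (forall y, 0 <= w y) ->
  (forall y, y \in X -> y \notin Y -> w y = 0) -> wt w X <= wt w Y.
Proof.
move=> w_ge0 w0; rewrite /wt (big_setID Y) /= [X in _ + X]big1 ?addr0; last first.
  by move=> y; rewrite inE => /andP[/w0].
rewrite big_mkcond [X in _ <= X]big_mkcond /= ler_sum // => y _.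
by rewrite !inE; case: (y \in Y); case: (y \in X).
Qed.
End Weight.

Section Robust.
Variables (R : realType) (E : finType) (F : {set {set E}}) (w : E -> R).

Lemma le_robust_value (S : {set E}) (L : R) : L <= wt w S ->
  (forall y, y \in S -> exists e,
     [/\ e \notin S, e |: (S :\ y) \in F & L <= wt w (e |: (S :\ y))]) ->
  L <= robust_value w F S.
Proof.
move=> le_LS repair.
suff le_L_rec f : L <= recovery_value w F S f by apply: le_bigmin.
case: f => [y|]; last exact: le_trans le_LS (bigmax_ge_id _ _ _ _).
have [yS|yNS] := boolP (y \in S); last first.
  by apply: le_trans (bigmax_ge_id _ _ _ _); rewrite /= setD1_id.
have [e [eNS eF le_Le]] := repair y yS.
apply: (bigmax_sup (Some e)) le_Le => /=.
by rewrite eNS eF andbT; apply: contraNneq eNS => -[->].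
Qed.

Lemma robust_value_le (S : {set E}) z (L : R) : z \in S -> wt w (S :\ z) <= L ->
  (forall y, y \notin S -> y |: (S :\ z) \in F -> wt w (y |: (S :\ z)) <= L) ->
  robust_value w F S <= L.
Proof.
move=> zS le_SL le_addL; apply: le_trans (bigmin_le _ (Some z) _) _.
by apply: bigmax_le => // -[y /andP[/andP[yNS _]]|] //=; apply: le_addL.
Qed.
End Robust.

Section Descent.
Variables (E : finType) (F : {set {set E}}).
Hypothesis F_down : downward_closed F.

Definition violating (I J : {set E}) : Prop :=
  [/\ I \in F, J \in F, #|J| = #|I|.+1 &
      forall y, y \in J :\: I -> y |: I \notin F].

Record critical (I : {set E}) (x g h : E) : Prop := Critical {
  critical_I : I \in F;
  critical_x : x \in I;
  critical_g : g \notin I;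
  critical_h : h \notin I;
  critical_gh : g != h;
  critical_J : g |: (h |: (I :\ x)) \in F;
  critical_gI : g |: I \notin F;
  critical_hI : h |: I \notin F;
  critical_exchange : forall c, c \in I -> c != x ->
    (g |: (I :\ c) \in F) || (h |: (I :\ c) \in F) }.

Definition smaller_violating (I J : {set E}) : Prop :=
  exists I' J', violating I' J' /\ (#|I'| + #|I' :\: J'| < #|I| + #|I :\: J|)%N.

Lemma violating_setD_neq0 I J : violating I J -> I :\: J != set0.
Proof.
case=> _ JF cardJ Jaug; rewrite setD_eq0; apply/negP => IJ.
have /properP[_ [y yJ yNI]] : I \proper J by rewrite properEcard IJ cardJ ltnSn.
have /negP[] : y |: I \notin F by apply: Jaug; rewrite inE yNI yJ.
by apply: F_down JF _; rewrite subUset sub1set yJ IJ.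
Qed.

Lemma violating_drop I J x : violating I J -> x \in I :\: J ->
  (forall g, g \in J :\: I -> g |: (I :\ x) \notin F) -> smaller_violating I J.
Proof.
case=> IF JF cardJ Jaug xIJ noaug; have /setDP[xI xNJ] := xIJ.
have /set0Pn[b bJI] : J :\: I != set0.
  by rewrite setD_eq0; apply/negP => /subset_leq_card; rewrite cardJ ltnn.
have /setDP[bJ bNI] := bJI.
have sub_IJ : (I :\ x) :\: (J :\ b) \subset I :\: J.
  apply/subsetP => z; rewrite !inE negb_and negbK => /and3P[/orP[/eqP->|->] _ zI] //.
  by rewrite zI in bNI.
exists (I :\ x), (J :\ b); split; first split.
- exact: F_down IF (subD1set _ _).
- exact: F_down JF (subD1set _ _).
- by have := cardsD1 b J; rewrite bJ cardJ (cardsD1 x I) xI !add1n => -[->].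
- move=> y; rewrite !inE negb_and negbK => /and3P[/orP[/eqP yx|yI] _ yJ].
    by rewrite -yx yJ in xNJ.
  by apply: noaug; rewrite inE yI yJ.
- rewrite (cardsD1 x I) xI add1n addSn ltnS leq_add2l.
  exact: subset_leq_card sub_IJ.
Qed.

Lemma violating_swap I J x g : violating I J -> x \in I :\: J ->
  g \in J :\: I -> g |: (I :\ x) \in F ->
  (forall h, h \in J :\: I -> h != g -> h |: (g |: (I :\ x)) \notin F) ->
  smaller_violating I J.
Proof.
case=> IF JF cardJ Jaug xIJ /setDP[gJ gNI] gF noaug; have /setDP[xI xNJ] := xIJ.
have gNIx : g \notin I :\ x by rewrite inE negb_and gNI orbT.
have sub_IJ : (g |: (I :\ x)) :\: J \subset (I :\: J) :\ x.
  apply/subsetP => z; rewrite !inE => /andP[zNJ /orP[/eqP zg|/andP[-> ->]]].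
    by rewrite zg gJ in zNJ.
  by rewrite zNJ.
exists (g |: (I :\ x)), J; split; first split => //.
- by rewrite cardsU1 gNIx cardJ (cardsD1 x I) xI.
- move=> y; rewrite !inE negb_or negb_and negbK.
  case/andP=> /andP[yg /orP[/eqP yx|yNI] yJ]; first by rewrite -yx yJ in xNJ.
  by apply: noaug; rewrite // inE yNI yJ.
- rewrite cardsU1 gNIx (cardsD1 x I) xI ltn_add2l (cardsD1 x (I :\: J)) xIJ.
  exact: subset_leq_card sub_IJ.
Qed.

Lemma violating_critical_or_smaller I J x g h : violating I J -> x \in I :\: J ->
  g \in J :\: I -> h \in J :\: I -> g != h -> g |: (h |: (I :\ x)) \in F ->
  critical I x g h \/ smaller_violating I J.
Proof.
case=> IF JF cardJ Jaug xIJ gJI hJI gh JxF; have /setDP[xI _] := xIJ.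
have /setDP[_ gNI] := gJI; have /setDP[_ hNI] := hJI.
have [/forall_inP exch | ] :=
  boolP [forall c in I, (c != x) ==> (g |: (I :\ c) \in F) || (h |: (I :\ c) \in F)].
  left; split; rewrite ?Jaug // => c cI; exact/implyP/exch.
rewrite negb_forall_in => /exists_inP[c cI]; rewrite negb_imply negb_or.
case/and3P=> cx gNF hNF; right.
set Jx := g |: (h |: (I :\ x)).
have gNIx : g \notin h |: (I :\ x) by rewrite !inE negb_or gh negb_and gNI orbT.
have hNIx : h \notin I :\ x by rewrite inE negb_and hNI orbT.
have cJx : c \in Jx by rewrite !inE cx cI !orbT.
have sub_x : (I :\ c) :\: (Jx :\ c) \subset [set x].
  apply/subsetP => z; rewrite !inE; case: (z =P x) => // _.
  by case/and3P=> zNJ zc zI; rewrite zc zI /= !orbT in zNJ.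
exists (I :\ c), (Jx :\ c); split; first split.
- exact: F_down IF (subD1set _ _).
- exact: F_down JxF (subD1set _ _).
- have cardJx : #|Jx| = #|I|.+1.
    by rewrite /Jx !cardsU1 gNIx hNIx (cardsD1 x I) xI.
  have := cardsD1 c Jx; rewrite cJx cardJx add1n => -[<-].
  by rewrite (cardsD1 c I) cI.
- move=> y; rewrite !inE negb_and negbK => /andP[/orP[/eqP->|yNI]]; first by rewrite eqxx.
  by case/andP=> yc /or3P[/eqP->|/eqP->|/andP[_ yI]] //; rewrite yI in yNI.
- rewrite (cardsD1 c I) cI add1n addSn ltnS leq_add2l.
  apply: leq_trans (subset_leq_card sub_x) _.
  by rewrite cards1 card_gt0; apply/set0Pn; exists x.
Qed.

Lemma violating_descent I J : violating I J ->
  (exists x g h, critical I x g h) \/ smaller_violating I J.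
Proof.
move=> vIJ; have /set0Pn[x xIJ] := violating_setD_neq0 vIJ.
have [/exists_inP[g gJI gF] | /exists_inPn noaug] :=
  boolP [exists g in J :\: I, g |: (I :\ x) \in F]; last first.
  by right; apply: violating_drop vIJ xIJ _.
have [/exists_inP[h hJI /andP[hg hF]] | /exists_inPn noaug] :=
  boolP [exists h in J :\: I, (h != g) && (h |: (g |: (I :\ x)) \in F)]; last first.
  right; apply: violating_swap vIJ xIJ gJI gF _ => h hJI hg.
  by have := noaug h hJI; rewrite negb_and hg.
have [crit|] := violating_critical_or_smaller vIJ xIJ hJI gJI hg hF; last by right.
by left; exists x, h, g.
Qed.

Lemma violating_critical I J : violating I J -> exists I x g h, critical I x g h.
Proof.
have [n] := ubnP (#|I| + #|I :\: J|); elim: n I J => // n IH I J lt_n vIJ.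
have [[x [g [h crit]]] | [I' [J' [vIJ' lt_IJ]]]] := violating_descent vIJ.
  by exists I, x, g, h.
exact: IH (leq_trans lt_IJ lt_n) vIJ'.
Qed.

Lemma exists_violating : ~ exchange_axiom F -> exists I J, violating I J.
Proof.
move=> not_exch.
have [/existsP[I /existsP[J /and4P[IF JF ltIJ /forall_inP noaug]]] | /existsPn none] :=
  boolP [exists I, exists J, [&& I \in F, J \in F, (#|I| < #|J|)%N &
                             [forall g in J :\: I, I :|: [set g] \notin F]]]; last first.
  case: not_exch => I J IF JF ltIJ; move/existsPn: (none I) => /(_ J).
  by rewrite IF JF ltIJ negb_forall_in => /exists_inP[g gJI /negPn]; exists g.
have [J' J'J cardJ'] := exists_subset_card ltIJ.
exists I, J'; split=> //; first exact: F_down JF J'J.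
move=> y /setDP[yJ' yNI]; rewrite setUC; apply: noaug.
by rewrite inE yNI (subsetP J'J _ yJ').
Qed.

End Descent.

Section Counterexample.
Variables (R : realType) (E : finType) (F : {set {set E}}).
Hypothesis F_down : downward_closed F.
Variables (I : {set E}) (x g h : E).
Hypothesis crit : critical F I x g h.

Local Notation J := (g |: (h |: (I :\ x))).

Let IF := critical_I crit.
Let xI := critical_x crit.
Let gNI := critical_g crit.
Let hNI := critical_h crit.
Let gh := critical_gh crit.
Let JF := critical_J crit.

(* 2 + 1 = 3 makes J as heavy as I, and 3 > 2 > 1 makes I the more robust. *)
Definition critical_weight (y : E) : R :=
  if y \in I then 3 else if y == g then 2 else if y == h then 1 else 0.

Local Notation w := critical_weight.

Lemma critical_weight_ge0 y : 0 <= w y.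
Proof. by rewrite /w; repeat case: ifP => _. Qed.

Lemma critical_weight_I y : y \in I -> w y = 3.
Proof. by rewrite /w => ->. Qed.

Lemma critical_weight_g : w g = 2.
Proof. by rewrite /w (negbTE gNI) eqxx. Qed.

Lemma critical_weight_h : w h = 1.
Proof. by rewrite /w (negbTE hNI) eq_sym (negbTE gh) eqxx. Qed.

Lemma critical_weight_out y : y \notin I -> y != g -> y != h -> w y = 0.
Proof. by rewrite /w => /negbTE-> /negbTE-> /negbTE->. Qed.

Lemma wt_repair y e : y \in I -> e \notin I -> wt w (e |: (I :\ y)) = wt w I - 3 + w e.
Proof.
move=> yI eNI; rewrite wt_setU1 ?wt_setD1 ?(critical_weight_I yI) //; first lra.
by rewrite inE negb_and eNI orbT.
Qed.

Lemma wt_exchange c : c \in I -> wt w (g |: (h |: (I :\ c))) = wt w I.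
Proof.
move=> cI; rewrite wt_setU1 ?wt_repair // ?critical_weight_g ?critical_weight_h; first lra.
by rewrite !inE negb_or gh negb_and gNI orbT.
Qed.

Lemma readd_x_subset a y : a \in J -> a != y -> a |: (I :\ y) \subset x |: (J :\ y).
Proof.
move=> aJ ay; apply/subsetP => z /setU1P[->|/setD1P[zy zI]].
  by rewrite !in_setU1 in_setD1 ay aJ orbT.
case: (z =P x) => [->|/eqP zx]; first exact: setU11.
by rewrite !in_setU1 in_setD1 zy !inE zx zI !orbT.
Qed.

Lemma nominal_optimal_J : nominal_optimal w F J.
Proof.
split=> // X XF; rewrite (wt_exchange xI).
have [ghX | ] := boolP ((g \in X) || (h \in X)); last first.
  rewrite negb_or => /andP[gNX hNX].
  apply: wt_le critical_weight_ge0 _ => y yX yNI; apply: critical_weight_out => //.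
    by apply: contraNneq gNX => <-.
  by apply: contraNneq hNX => <-.
have [c cI cNX] : exists2 c, c \in I & c \notin X.
  apply/subsetPn; apply: contraNN (critical_gI crit) => IX.
  case/orP: ghX => [gX|hX]; last first.
    by have /negP[] := critical_hI crit; apply: F_down XF _; rewrite subUset sub1set hX.
  by apply: F_down XF _; rewrite subUset sub1set gX.
rewrite -(wt_exchange cI); apply: wt_le critical_weight_ge0 _ => y yX.
rewrite !inE !negb_or negb_and negbK => /and3P[yg yh /orP[/eqP yc|yNI]].
  by rewrite -yc yX in cNX.
exact: critical_weight_out.
Qed.

Lemma le_robust_I t : t <= 2 ->
  (forall y, y \in I -> y != x -> exists e,
     [/\ e \notin I, e |: (I :\ y) \in F & t <= w e]) ->
  wt w I - 3 + t <= robust_value w F I.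
Proof.
move=> t2 repair; apply: le_robust_value; first lra.
move=> y yI; have [->|yx] := eqVneq y x.
  exists g; rewrite wt_repair // critical_weight_g; split=> //; last lra.
  by apply: F_down JF _; apply: setUS; apply: subsetUr.
have [e [eNI eF te]] := repair y yI yx.
by exists e; rewrite wt_repair //; split=> //; lra.
Qed.

Lemma robust_J_le z : z \in J -> x |: (J :\ z) \notin F ->
  robust_value w F J <= wt w I - w z.
Proof.
move=> zJ xNF; rewrite -(wt_exchange xI) -wt_setD1 //.
apply: robust_value_le zJ _ _ => // y yNJ yF.
have yx : y != x by apply: contraNneq xNF => eyx; move: yF; rewrite eyx.
rewrite wt_setU1 ?critical_weight_out ?add0r //.
- by apply: contraNN yNJ => yI; rewrite !inE yx yI !orbT.
- by apply: contraNneq yNJ => ->; rewrite setU11.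
- by apply: contraNneq yNJ => ->; rewrite !inE eqxx orbT.
- by rewrite inE negb_and yNJ orbT.
Qed.

Lemma not_robust_optimal_J : ~ robust_optimal w F J.
Proof.
have gJ : g \in J by rewrite setU11.
have hJ : h \in J by rewrite !inE eqxx orbT.
case=> _ /(_ I IF) le_IJ.
have [/forall_inP g_repairs | ] :=
  boolP [forall y in I, (y != x) ==> (g |: (I :\ y) \in F)].
  have lo : wt w I - 3 + 2 <= robust_value w F I.
    apply: le_robust_I => // y yI yx; exists g; rewrite critical_weight_g; split=> //.
    exact: implyP (g_repairs y yI) yx.
  have up : robust_value w F J <= wt w I - w g.
    apply: robust_J_le gJ _; apply: contraNN (critical_hI crit) => xF.
    apply: F_down xF _; rewrite -{1}(setD1_id gNI); apply: readd_x_subset hJ _.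
    by rewrite eq_sym.
  by move: up; rewrite critical_weight_g; lra.
rewrite negb_forall_in => /exists_inP[c cI]; rewrite negb_imply => /andP[cx gNF].
have lo : wt w I - 3 + 1 <= robust_value w F I.
  apply: le_robust_I => [|y yI yx]; first lra.
  case/orP: (critical_exchange crit yI yx) => [gF|hF].
    by exists g; rewrite critical_weight_g; split=> //; lra.
  by exists h; rewrite critical_weight_h; split.
have up : robust_value w F J <= wt w I - w c.
  apply: robust_J_le; first by rewrite !inE cx cI !orbT.
  apply: contraNN gNF => xF; apply: F_down xF _; apply: readd_x_subset gJ _.
  by apply: contraNneq gNI => ->.
by move: up; rewrite critical_weight_I //; lra.
Qed.

Lemma critical_counterexample : exists w : E -> R, (forall y, 0 <= w y) /\
  exists S : {set E}, nominal_optimal w F S /\ ~ robust_optimal w F S.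
Proof.
exists w; split; first exact: critical_weight_ge0.
by exists J; split; [exact: nominal_optimal_J | exact: not_robust_optimal_J].
Qed.

End Counterexample.

Theorem theorem2 (R : realType) (E : finType) (F : {set {set E}}) :
  F != set0 -> downward_closed F -> ~ is_matroid F ->
  exists w : E -> R, (forall x, 0 <= w x) /\
    exists S : {set E}, nominal_optimal w F S /\ ~ robust_optimal w F S.
Proof.
move=> F0 F_down not_matroid.
have not_exch : ~ exchange_axiom F.
  by move=> exch; apply: not_matroid; split; [|split].
have [I [J vIJ]] := exists_violating F_down not_exch.
have [I' [x [g [h crit]]]] := violating_critical F_down vIJ.
exact: (critical_counterexample R F_down crit).
Qed.
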